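(* Let $G$ be a locally compact, Hausdorff, étale groupoid and $\alpha$ an automorphism of $G$. Suppose that $G$ is ample and that $\mathcal{B}$ is a basis for the topology on $G^{(0)}$ consisting of compact open bisections such that for every $V \in \mathcal{B}$ there exists an integer $l \ge 1$ with $\alpha^{-l}(V)\subseteq V$. Then $G^\infty_\alpha$ is locally contracting.
   Context: Let $E$ be the directed graph with one vertex $v$ and countably infinitely many edges $e_1,e_2,\dots$. Let $E^*$ be its finite paths (including $v$), $E^\infty$ its infinite paths, $P = E^*\sqcup E^\infty$, $|\mu|$ the length. $H_\infty$ is the groupoid $\{(\alpha x, |\alpha|-|\beta|, \beta x) : x\in P, \alpha,\beta\in E^*\}\subseteq P\times\mathbb{Z}\times P$ with $(x,m,y)(y,n,z)=(x,m+n,z)$, $(x,m,y)^{-1}=(y,-m,x)$, unit space identified with $P$, topology generated by the sets $Z((\alpha,\beta)\setminus F)=\{(\alpha x,|\alpha|-|\beta|,\beta x): x\in P, x\text{ does not begin with an edge in }F\}$ ($F$ finite); $c(x,m,y)=m$. An automorphism is a structure-preserving homeomorphism. $G^\infty_\alpha$ is $H_\infty\times G$ with product topology, unit space $H_\infty^{(0)}\times G^{(0)}$, $r(h,g)=(r(h),r(g))$, $s(h,g)=(s(h),\alpha^{c(h)}(s(g)))$, product $(h_1,g_1)(h_2,g_2)=(h_1h_2,g_1\alpha^{-c(h_1)}(g_2))$, inverse $(h,g)^{-1}=(h^{-1},\alpha^{c(h)}(g^{-1}))$. A groupoid is ample if it has a basis of compact open bisections. An ample groupoid $L$ is locally contracting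 if for every nonempty open $W\subseteq L^{(0)}$ there is a compact open bisection $B$ with $r(B)\subsetneq s(B)\subseteq W$. *)

From HB Require Import structures.
From mathcomp Require Import all_boot all_order all_algebra.
From mathcomp Require Import all_classical all_reals all_analysis.
Set Implicit Arguments. Unset Strict Implicit. Unset Printing Implicit Defensive.
Import Order.TTheory GRing.Theory Num.Theory.
Local Open Scope classical_set_scope.

(** Paths of the graph E (one vertex, edges indexed by nat). *)
Definition path_P : Type := (seq nat + (nat -> nat))%type.

Definition pcat (a : seq nat) (x : path_P) : path_P :=
  match x with
  | inl s => inl (a ++ s)
  | inr f => inr (fun n => if (n < size a)%N then nth 0%N a n else f (n - size a)%N)
  end.

Definition begins_in (F : seq nat) (x : path_P) : Prop :=
  match x with
  | inl [::] => False
  | inl (e :: _) => e \in F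
  | inr f => f 0%N \in F
  end.

Definition Hamb : Type := (path_P * int * path_P)%type.
HB.instance Definition _ := Choice.on Hamb.

Definition Zset (i : (seq nat * seq nat) * seq nat) : set Hamb :=
  [set t | exists x : path_P, ~ begins_in i.2 x /\
     t = (pcat i.1.1 x, ((size i.1.1)%:Z - (size i.1.2)%:Z)%R, pcat i.1.2 x)].

Definition Zidx : Type := ((seq nat * seq nat) * seq nat)%type.
HB.instance Definition _ := Choice.on Zidx.
HB.instance Definition _ := isPointed.Build Zidx (([::], [::]), [::]).

HB.instance Definition _ :=
  @isSubBaseTopological.Build Hamb Zidx setT Zset.


Record gpd (T : Type) := Gpd {
  arr : set T;
  rg : T -> T;
  sc : T -> T;
  mul : T -> T -> T;
  inv : T -> T }.

Definition units T (G : gpd T) : set T := rg G @` arr G.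

Definition is_groupoid T (G : gpd T) : Prop :=
  (forall g, arr G g ->
     [/\ arr G (rg G g), arr G (sc G g) & arr G (inv G g)]) /\
  (forall g, arr G g ->
     [/\ rg G (rg G g) = rg G g, sc G (rg G g) = rg G g,
         rg G (sc G g) = sc G g & sc G (sc G g) = sc G g]) /\
  (forall g, arr G g ->
     rg G (inv G g) = sc G g /\ sc G (inv G g) = rg G g) /\
  (forall g, arr G g ->
     [/\ mul G (rg G g) g = g, mul G g (sc G g) = g,
         mul G g (inv G g) = rg G g & mul G (inv G g) g = sc G g]) /\
  (forall g h, arr G g -> arr G h -> sc G g = rg G h ->
     [/\ arr G (mul G g h), rg G (mul G g h) = rg G g & sc G (mul G g h) = sc G h]) /\
  (forall g h k, arr G g -> arr G h -> arr G k -> sc G g = rg G h -> sc G h = rg G k ->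
     mul G (mul G g h) k = mul G g (mul G h k)).

Definition open_in (T : topologicalType) (A W : set T) : Prop :=
  exists O, open O /\ W = O `&` A.

Definition hausdorff_in (T : topologicalType) (A : set T) : Prop :=
  forall x y, A x -> A y -> x <> y ->
    exists U V, [/\ open U, open V, U x, V y & U `&` V = set0].

Definition locally_compact_in (T : topologicalType) (A : set T) : Prop :=
  forall x, A x -> exists K O, [/\ compact K, K `<=` A, open O, O x & O `&` A `<=` K].

Definition composable T (G : gpd T) : set (T * T) :=
  [set p | [/\ arr G p.1, arr G p.2 & sc G p.1 = rg G p.2]].

Definition is_topological_groupoid (T : topologicalType) (G : gpd T) : Prop :=
  is_groupoid G /\
  {within arr G, continuous (inv G)} /\
  {within composable G, continuous (fun p => mul G p.1 p.2)}.

(** étale: the range map is a local homeomorphism from G onto G^(0) *)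
Definition etale (T : topologicalType) (G : gpd T) : Prop :=
  forall g, arr G g -> exists U, [/\ open U, U g,
    (forall x y, (U `&` arr G) x -> (U `&` arr G) y -> rg G x = rg G y -> x = y),
    {within U `&` arr G, continuous (rg G)} &
    (forall O, open O -> open_in (units G) (rg G @` (O `&` U `&` arr G)))].

Definition lch_etale_groupoid (T : topologicalType) (G : gpd T) : Prop :=
  [/\ is_topological_groupoid G, locally_compact_in (arr G),
      hausdorff_in (arr G) & etale G].

Definition bisection T (G : gpd T) (B : set T) : Prop :=
  B `<=` arr G /\
  (forall x y, B x -> B y -> rg G x = rg G y -> x = y) /\
  (forall x y, B x -> B y -> sc G x = sc G y -> x = y).

Definition compact_open_bisection (T : topologicalType) (G : gpd T) (B : set T) : Prop :=
  [/\ compact B, open_in (arr G) B & bisection G B].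

Definition ample (T : topologicalType) (G : gpd T) : Prop :=
  forall O g, open O -> arr G g -> O g ->
    exists B, [/\ compact_open_bisection G B, B g & B `<=` O].

Definition locally_contracting (T : topologicalType) (G : gpd T) : Prop :=
  forall W, open_in (units G) W -> W !=set0 ->
    exists B, [/\ compact_open_bisection G B,
                  rg G @` B `<` sc G @` B & sc G @` B `<=` W].

Definition zpow T (a ai : T -> T) (z : int) : T -> T :=
  match z with
  | Posz n => iter n a
  | Negz n => iter n.+1 ai
  end.

Definition automorphism (T : topologicalType) (G : gpd T) (a ai : T -> T) : Prop :=
  [/\ (forall g, arr G g -> [/\ arr G (a g), arr G (ai g), ai (a g) = g & a (ai g) = g]),
      {within arr G, continuous a}, {within arr G, continuous ai},
      (forall g, arr G g -> [/\ rg G (a g) = a (rg G g), sc G (a g) = a (sc G g)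
                              & inv G (a g) = a (inv G g)]) &
      (forall g h, arr G g -> arr G h -> sc G g = rg G h ->
         sc G (a g) = rg G (a h) /\ a (mul G g h) = mul G (a g) (a h))].

Definition Hset : set Hamb :=
  [set t | exists (a b : seq nat) (x : path_P),
     t = (pcat a x, ((size a)%:Z - (size b)%:Z)%R, pcat b x)].

Definition Hinf : gpd Hamb :=
  {| arr := Hset;
     rg := fun t => (t.1.1, 0%R, t.1.1);
     sc := fun t => (t.2, 0%R, t.2);
     mul := fun t u => (t.1.1, (t.1.2 + u.1.2)%R, u.2);
     inv := fun t => (t.2, (- t.1.2)%R, t.1.1) |}.

Definition cocycle (t : Hamb) : int := t.1.2.

Definition Ginf (T : topologicalType) (G : gpd T) (a ai : T -> T) : gpd (Hamb * T) :=
  {| arr := Hset `*` arr G;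
     rg := fun p => (rg Hinf p.1, rg G p.2);
     sc := fun p => (sc Hinf p.1, zpow a ai (cocycle p.1) (sc G p.2));
     mul := fun p q => (mul Hinf p.1 q.1,
                        mul G p.2 (zpow a ai (- cocycle p.1)%R q.2));
     inv := fun p => (inv Hinf p.1, zpow a ai (cocycle p.1) (inv G p.2)) |}.

From HB Require Import structures.
From mathcomp Require Import all_boot all_order all_algebra finmap.
From mathcomp Require Import all_classical all_reals all_analysis.
From mathcomp Require Import zify.
Set Implicit Arguments. Unset Strict Implicit. Unset Printing Implicit Defensive.
Import GRing.Theory.
Local Open Scope classical_set_scope.

(* A point of a nonempty open set W of units of G^oo_alpha has a neighbourhood
   Z(mu \ F) x V inside W, with V a basic compact open set of units of G and
   alpha^-l(V) in V.  For an edge e outside F, the bisection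
   B = Z((mu e^l, mu) \ F) x alpha^-l(V) has cocycle l, which alpha^l undoes, so
   s(B) = Z(mu \ F) x V, while r(B) = Z(mu e^l \ F) x alpha^-l(V) is strictly
   smaller: it misses the finite path mu.  The topological input is compactness
   of the cylinders Z((al, be) \ F): an ultrafilter on the path space converges
   to the path obtained by greedily extending prefixes with large cylinders. *)

Lemma open_setX (U V : topologicalType) (A : set U) (B : set V) :
  open A -> open B -> open (A `*` B).
Proof.
rewrite !openE => oA oB [x y] [/= Ax By].
by exists (A, B) => //; split; [apply: oA | apply: oB].
Qed.

Lemma open_in_setX (U V : topologicalType) (X A : set U) (Y B : set V) :
  open A -> A `<=` X -> open_in Y B -> open_in (X `*` Y) (A `*` B).
Proof.
move=> oA sAX [W [oW ->]]; exists (A `*` W); split; first exact: open_setX.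
by rewrite -setXI (setIidl sAX).
Qed.

Lemma preimage_open_in (U V : topologicalType) (f : U -> V) (A : set U) (O : set V) :
  {within A, continuous f} -> open O -> open_in A (f @^-1` O `&` A).
Proof.
move=> /continuousP f_cont oO; have /open_subspaceP [W oW WE] := f_cont O oO.
by exists W; split.
Qed.

Lemma pcat0 x : pcat [::] x = x.
Proof. by case: x => [s|f] //=; congr inr; apply: funext => n; rewrite subn0. Qed.

Lemma pcat_cat a b x : pcat (a ++ b) x = pcat a (pcat b x).
Proof.
case: x => [s|f] /=; first by rewrite catA.
congr inr; apply: funext => n; rewrite size_cat nth_cat.
case: (ltnP n (size a)) => na; first by have -> : n < size a + size b by lia.
case: (ltnP (n - size a) (size b)) => nab; first by have -> : n < size a + size b by lia.
have -> : (n < size a + size b) = false by lia.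
by congr f; lia.
Qed.

Lemma pcat_inj a : injective (pcat a).
Proof.
move=> [s|f] [t|g] //=.
  by move=> [/(congr1 (drop (size a)))]; rewrite !drop_size_cat // => ->.
move=> [/(congr1 (fun h => h (_ + size a)))] /= E; congr inr; apply: funext => n.
by move: (E n); rewrite ltnNge leq_addl addnK.
Qed.

Lemma pcat_prefix a b x y : pcat a x = pcat b y -> size a <= size b ->
  exists2 c, b = a ++ c & x = pcat c y.
Proof.
move=> E ab; have Eb : b = a ++ drop (size a) b.
  rewrite -{1}(cat_take_drop (size a) b); congr cat.
  case: x y E => [s|f] [t|g] //= [E].
    by move: (congr1 (take (size a)) E); rewrite take_size_cat // takel_cat.
  apply: (@eq_from_nth _ 0); first by rewrite size_takel.
  move=> i; rewrite size_takel // => ia; rewrite nth_take //.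
  by move: (congr1 (fun h => h i) E); rewrite /= ia (leq_trans ia ab).
exists (drop (size a) b) => //; apply: (@pcat_inj a).
by rewrite -pcat_cat -Eb.
Qed.

Lemma pcat_same_size a b x y : pcat a x = pcat b y -> size a = size b -> a = b /\ x = y.
Proof.
move=> E ab; have [c Eb Ex] := pcat_prefix E (eq_leq ab).
have c0 : c = [::] by apply: size0nil; move: ab; rewrite Eb size_cat; lia.
by move: Eb Ex; rewrite c0 cats0 pcat0.
Qed.

Lemma begins_in_cons F e c x : begins_in F (pcat (e :: c) x) <-> e \in F.
Proof. by case: x. Qed.

Lemma begins_in_nil x : ~ begins_in [::] x.
Proof. by case: x => [[|]|]. Qed.

Lemma begins_in_cat F1 F2 x : begins_in (F1 ++ F2) x <-> begins_in F1 x \/ begins_in F2 x.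
Proof.
case: x => [[|e s]|f] /=; rewrite ?mem_cat; first by split=> // -[].
  by split=> [/orP|[]->]; rewrite ?orbT.
by split=> [/orP|[]->]; rewrite ?orbT.
Qed.

Lemma begins_inP F z : begins_in F z -> exists2 e, e \in F & exists z', z = pcat [:: e] z'.
Proof.
case: z => [[|e s]|f] //= Fz; first by exists e => //; exists (inl s).
exists (f 0) => //; exists (inr (fun n => f n.+1)).
by congr inr; apply: funext => -[|n] //=; rewrite subn1.
Qed.

Lemma exists_notin (F : seq nat) : exists e, e \notin F.
Proof.
suff notin n : sumn F < n -> n \notin F by exists (sumn F).+1; apply: notin.
elim: F n => [|x F IH] n //= lt_sum.
by rewrite in_cons negb_or IH ?andbT; lia.
Qed.

Definition cyl (m F : seq nat) : set path_P := pcat m @` ~` begins_in F.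

Lemma cyl_catr p e r F H : e \notin H -> cyl (p ++ e :: r) F `<=` cyl p H.
Proof.
move=> /negP eH _ [x _ <-]; exists (pcat (e :: r) x); last by rewrite pcat_cat.
by rewrite /= begins_in_cons.
Qed.

Lemma cyl_nil m : cyl m [::] = range (pcat m).
Proof. by apply/seteqP; split=> _ [x _ <-]; exists x => //; apply: begins_in_nil. Qed.

Lemma cyl_meet m1 F1 m2 F2 p : cyl m1 F1 p -> cyl m2 F2 p ->
  exists m F, cyl m F p /\ cyl m F `<=` cyl m1 F1 `&` cyl m2 F2.
Proof.
wlog m12 : m1 F1 m2 F2 / size m1 <= size m2.
  move=> wlog_m12 p1 p2; case: (leqP (size m1) (size m2)) => [m12|/ltnW m21].
    exact: wlog_m12.
  have [m [F [pF sub]]] := wlog_m12 _ _ _ _ m21 p2 p1.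
  by exists m, F; split=> // q /sub [].
move=> [x1 F1x1 <-] [x2 F2x2 E]; have [c m2E x1E] := pcat_prefix (esym E) m12.
case: c m2E x1E => [|e c] m2E x1E.
  rewrite cats0 pcat0 in m2E x1E; subst m2 x1.
  exists m1, (F1 ++ F2); split; first by exists x2 => // /begins_in_cat [].
  by move=> _ [y Fy <-]; split; exists y => // ?; apply: Fy; apply/begins_in_cat; tauto.
exists m2, F2; split; first by exists x2.
move=> q m2q; split => //; move: m2q; rewrite m2E; apply: cyl_catr.
by apply/negP => eF1; apply: F1x1; rewrite x1E; apply/begins_in_cons.
Qed.

Lemma inl_notin_cyl_cat m c F : c != [::] -> ~ cyl (m ++ c) F (inl m).
Proof.
move=> c0 [[s|f] _ //= [/(congr1 size)]]; rewrite !size_cat.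
by case: c c0 => //= e c _; lia.
Qed.

Section UltraPathLimit.
Variable V : set_system path_P.
Hypothesis V_filter : Filter V.
Hypothesis V_ultra : forall A, V A \/ V (~` A).

Definition grow (g : seq nat) : seq nat :=
  if pselect (exists e, V (cyl (rcons g e) [::])) is left ex_e
  then rcons g (projT1 (cid ex_e)) else g.

Definition greedy n := iter n grow [::].

Lemma V_greedy n : V (cyl (greedy n) [::]).
Proof.
elim: n => [|n IH] /=.
  by rewrite cyl_nil; apply: filterS filterT => x _; exists x; rewrite ?pcat0.
by rewrite /grow; case: pselect => // ex_e; case: (cid ex_e).
Qed.

Lemma maximal_prefix_limit g : V (cyl g [::]) ->
  ~ (exists e, V (cyl (rcons g e) [::])) ->
  forall p H, cyl p H (inl g) -> V (cyl p H).
Proof.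
move=> Vg stuck p H [[[|e r]|f] Hz] //= [gE]; subst g.
  rewrite cats0 in Vg stuck.
  have VH : V [set x | forall e, e \in H -> ~ cyl (rcons p e) [::] x].
    elim: H {Hz} => [|e H IH]; first by apply: filterS filterT.
    have Ve : V (~` cyl (rcons p e) [::]).
      by case: (V_ultra (cyl (rcons p e) [::])) => // Ve; case: stuck; exists e.
    apply: filterS (filterI IH Ve) => x [xH xe] e'.
    by rewrite in_cons => /orP [/eqP -> | /xH].
  apply: filterS (filterI Vg VH) => _ [[x _ <-] notext].
  exists x => // /begins_inP [e eH [z xE]].
  by apply: (notext e eH); exists z; [apply: begins_in_nil | rewrite xE -cats1 pcat_cat].
apply: filterS Vg; apply: cyl_catr; apply/negP.
exact: Hz.
Qed.

Definition greedy_path : path_P := inr (fun k => nth 0 (greedy k.+1) k).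

Lemma greedy_growing n : (exists e, V (cyl (rcons (greedy n) e) [::])) ->
  exists e, greedy n.+1 = rcons (greedy n) e.
Proof. by rewrite /= /grow; case: pselect => // ex_e _; eexists. Qed.

Lemma greedy_prefix : (forall n, exists e, V (cyl (rcons (greedy n) e) [::])) ->
  forall n, greedy n = mkseq (fun k => nth 0 (greedy k.+1) k) n.
Proof.
move=> grows; elim=> [|n IH] //; have [e En] := greedy_growing (grows n).
rewrite mkseqS -IH En; congr rcons.
by rewrite nth_rcons IH size_mkseq ltnn eqxx.
Qed.

Lemma infinite_limit : (forall n, exists e, V (cyl (rcons (greedy n) e) [::])) ->
  forall p H, cyl p H greedy_path -> V (cyl p H).
Proof.
move=> grows p H [[s|f] Hf] //= [fE].
have pfE : greedy (size p).+1 = rcons p (f 0).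
  rewrite greedy_prefix //; apply: (@eq_from_nth _ 0); rewrite size_mkseq ?size_rcons //.
  move=> i ip; rewrite nth_mkseq // -(congr1 (fun h => h i) fE) /= nth_rcons.
  case: ltnP => // pi; have -> : i = size p by lia.
  by rewrite eqxx subnn.
apply: filterS (V_greedy (size p).+1); rewrite pfE -cats1.
by apply: cyl_catr; apply/negP.
Qed.

Lemma ultra_path_limit : exists L, forall p H, cyl p H L -> V (cyl p H).
Proof.
have [[n stuck]|grows] := pselect (exists n, ~ exists e, V (cyl (rcons (greedy n) e) [::])).
  by exists (inl (greedy n)); apply: maximal_prefix_limit (V_greedy n) stuck.
exists greedy_path; apply: infinite_limit => n.
by apply: contra_notP grows => stuck; exists n.
Qed.

End UltraPathLimit.

Definition hunit (q : path_P) : Hamb := (q, 0%R, q).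

Definition harr (al be : seq nat) (x : path_P) : Hamb :=
  (pcat al x, ((size al)%:Z - (size be)%:Z)%R, pcat be x).

Lemma harr_cat al be c x : harr (al ++ c) (be ++ c) x = harr al be (pcat c x).
Proof. by rewrite /harr !pcat_cat !size_cat; congr (_, _, _); lia. Qed.

Lemma harr_inj al be : injective (harr al be).
Proof. by move=> x y [/pcat_inj]. Qed.

Lemma Zset_image al be F : Zset ((al, be), F) = harr al be @` ~` begins_in F.
Proof. by apply/seteqP; split=> t; [case=> x [Fx ->] | case=> x Fx <-]; exists x. Qed.

Lemma open_Zset i : open (Zset i).
Proof.
exists [set Zset i]; last by rewrite bigcup_set1.
move=> _ ->; exists [fset i]%fset; first by move=> j _; apply/mem_set.
apply/seteqP; split=> [x|x xi j]; first by apply; rewrite /= inE.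
by rewrite /= inE => /eqP ->.
Qed.

Lemma nbhs_ZsetP (t : Hamb) A : nbhs t A ->
  exists D : {fset Zidx}, (forall i, i \in D -> Zset i t) /\
    \bigcap_(i in [set` D]) Zset i `<=` A.
Proof.
rewrite nbhsE => -[_ [[S SZ <-] [B SB Bt]] SA]; have [D _ DB] := SZ _ SB.
exists D; split; first by move=> i Di; rewrite -DB in Bt; apply: Bt.
by rewrite DB => x Bx; apply: SA; exists B.
Qed.

Lemma not_begins_in_pcat G c L : ~ begins_in G (pcat c L) ->
  exists H, ~ begins_in H L /\ forall z, ~ begins_in H z -> ~ begins_in G (pcat c z).
Proof.
case: c => [|e c] GL; first by rewrite pcat0 in GL; exists G; split=> // z; rewrite pcat0.
exists [::]; split=> [|z _]; first exact: begins_in_nil.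
by rewrite !begins_in_cons in GL *.
Qed.

Lemma Zset_harr_cyl c d G al be L : Zset ((c, d), G) (harr al be L) ->
  exists p H, cyl p H L /\ harr al be @` cyl p H `<=` Zset ((c, d), G).
Proof.
rewrite Zset_image => -[y Gy [E1 Ek E2]].
case: (leqP (size c) (size al)) => [ca|/ltnW ac].
  have [c1 alE yE] := pcat_prefix E1 ca.
  have [d1 beE yE'] : exists2 d1, be = d ++ d1 & y = pcat d1 L.
    by apply: pcat_prefix E2 _; lia.
  have [c1d1 _] : c1 = d1 /\ L = L.
    by apply: pcat_same_size; [rewrite -yE -yE' | move: Ek; rewrite alE beE !size_cat; lia].
  subst d1.
  rewrite yE in Gy; have [H [HL HG]] := not_begins_in_pcat Gy.
  exists [::], H; split; first by exists L; rewrite ?pcat0.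
  move=> _ [_ [z Hz <-] <-]; rewrite pcat0 alE beE harr_cat.
  by exists (pcat c1 z) => //; apply: HG.
have [c2 cE LE] := pcat_prefix (esym E1) ac.
have [d2 dE LE'] : exists2 d2, d = be ++ d2 & L = pcat d2 y.
  by apply: pcat_prefix (esym E2) _; lia.
have [c2d2 _] : c2 = d2 /\ y = y.
  by apply: pcat_same_size; [rewrite -LE -LE' | move: Ek; rewrite cE dE !size_cat; lia].
subst d2.
exists c2, G; split; first by exists y.
by move=> _ [_ [z Gz <-] <-]; rewrite cE dE; exists z; rewrite // harr_cat.
Qed.

Lemma compact_Zset i : compact (Zset i).
Proof.
case: i => [[al be] F]; rewrite compact_ultra => U U_ultra UZ.
pose V := [set A | U (harr al be @` A)].
have V_filter : Filter V.
  constructor; rewrite /V.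
  - by apply: filterS UZ; rewrite Zset_image; apply: image_subset.
  - move=> A B /= VA VB; apply: filterS (filterI VA VB).
    by move=> _ [[x Ax <-] [y By /harr_inj yx]]; subst y; exists x.
  - by move=> A B AB /= UA; apply: filterS UA; apply: image_subset.
have V_ultra A : V A \/ V (~` A).
  case: (in_ultra_setVsetC (harr al be @` A) U_ultra) => [|UnA]; [by left | right].
  apply: filterS (filterI UZ UnA); rewrite Zset_image => _ [[x _ <-] nA].
  by exists x => // Ax; apply: nA; exists x.
have [L LV] := ultra_path_limit V_filter V_ultra.
(* A V-large cylinder around a path starting in F would meet ~` begins_in F. *)
have FL : ~ begins_in F L.
  move=> /begins_inP [e eF [z Lz]].
  have Ve : V (cyl [:: e] [::]) by apply: LV; exists z; [apply: begins_in_nil | rewrite Lz].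
  have VnF : V (~` begins_in F) by rewrite /V /= -Zset_image.
  have : V set0 by apply: filterS (filterI Ve VnF) => _ [[y _ <-]]; rewrite /= begins_in_cons.
  by rewrite /V /= image_set0; apply: filter_not_empty.
exists (harr al be L); split; first by rewrite Zset_image; exists L.
move=> A /nbhs_ZsetP [D [DL DA]]; rewrite nbhs_filterE; apply: (filterS DA).
apply: filter_bigI.
move=> [[c d] G] /DL /Zset_harr_cyl [p [H [pH sub]]].
exact: filterS sub (LV _ _ pH).
Qed.

Lemma Zset_hunit c d G q : Zset ((c, d), G) (hunit q) -> c = d /\ cyl c G q.
Proof.
move=> [x [Gx [E1 Ek E2]]]; have [cd _] : c = d /\ x = x.
  by apply: pcat_same_size; [rewrite -E1 -E2 | lia].
by split=> //; exists x.
Qed.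

Lemma hunit_cyl_sub c G : hunit @` cyl c G `<=` Zset ((c, c), G).
Proof. by move=> _ [_ [x Gx <-] <-]; exists x; rewrite /hunit subrr. Qed.

Lemma hunit_cyl_bigcap p (s : seq Zidx) : (forall i, i \in s -> Zset i (hunit p)) ->
  exists m F, cyl m F p /\ hunit @` cyl m F `<=` \bigcap_(i in [set` s]) Zset i.
Proof.
elim: s => [_|[[c d] G] s IH sp].
  exists [::], [::]; split=> [|t _ i]; last by rewrite /= in_nil.
  by exists p; [apply: begins_in_nil | rewrite pcat0].
have [m1 [F1 [pF1 sub1]]] := IH (fun i si => sp i (@mem_behead _ (_ :: s) i si)).
have [<- pG] := Zset_hunit (sp _ (mem_head _ _)).
have [m [F [pF sub]]] := cyl_meet pF1 pG.
exists m, F; split=> // _ [q mq <-] i /=; rewrite in_cons => /orP [/eqP -> | si].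
  by apply: hunit_cyl_sub; exists q => //; have [] := sub _ mq.
by apply: sub1 => //; exists q => //; have [] := sub _ mq.
Qed.

Lemma nbhs_hunit p A : nbhs (hunit p) A ->
  exists m F, cyl m F p /\ hunit @` cyl m F `<=` A.
Proof.
move=> /nbhs_ZsetP [D [Dp DA]]; have [m [F [pF sub]]] := hunit_cyl_bigcap Dp.
by exists m, F; split=> //; apply: subset_trans DA.
Qed.

Section Groupoid.
Variables (T : Type) (G : gpd T).
Hypothesis G_gpd : is_groupoid G.

Lemma unitsP v : units G v -> [/\ arr G v, rg G v = v & sc G v = v].
Proof.
case=> g Gg <-; case: G_gpd => G1 [G2 _].
by have [? ? ?] := G1 _ Gg; have [? ? ? ?] := G2 _ Gg.
Qed.

End Groupoid.

Lemma zpowN (T : Type) (a ai : T -> T) l : (0 < l)%N -> zpow a ai (- l%:Z)%R = iter l ai.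
Proof. by case: l. Qed.

Section Automorphism.
Variables (T : topologicalType) (G : gpd T) (a ai : T -> T).
Hypothesis G_gpd : is_groupoid G.
Hypothesis a_aut : automorphism G a ai.

Lemma a_arr g : arr G g -> arr G (a g).
Proof. by case: a_aut => A1 _ _ _ _ /A1 []. Qed.
Lemma ai_arr g : arr G g -> arr G (ai g).
Proof. by case: a_aut => A1 _ _ _ _ /A1 []. Qed.
Lemma ai_a g : arr G g -> ai (a g) = g.
Proof. by case: a_aut => A1 _ _ _ _ /A1 []. Qed.
Lemma a_ai g : arr G g -> a (ai g) = g.
Proof. by case: a_aut => A1 _ _ _ _ /A1 []. Qed.

Lemma iter_ai_arr k g : arr G g -> arr G (iter k ai g).
Proof. by elim: k => [|k IH] //= /IH /ai_arr. Qed.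

Lemma iter_a_ai k g : arr G g -> iter k a (iter k ai g) = g.
Proof.
elim: k g => [|k IH] g Gg //=.
by rewrite -iterS iterSr a_ai ?IH //; apply: iter_ai_arr.
Qed.

Lemma rg_ai g : arr G g -> rg G (ai g) = ai (rg G g).
Proof.
move=> Gg; case: a_aut => _ _ _ A4 _; have [rg_a _ _] := A4 _ (ai_arr Gg).
rewrite -[X in ai (rg G X)](a_ai Gg) rg_a ai_a //.
by case: G_gpd => G1 _; case: (G1 _ (ai_arr Gg)).
Qed.

Lemma units_ai v : units G v -> units G (ai v).
Proof. by case=> g Gg <-; exists (ai g); [apply: ai_arr | apply: rg_ai]. Qed.

Lemma units_iter_ai k v : units G v -> units G (iter k ai v).
Proof. by elim: k => [|k IH] //= /IH /units_ai. Qed.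

Lemma ai_image_compact_open S : compact S -> open_in (arr G) S -> S `<=` arr G ->
  [/\ compact (ai @` S), open_in (arr G) (ai @` S) & ai @` S `<=` arr G].
Proof.
move=> cS [W [oW SE]] sS; case: a_aut => _ a_cont ai_cont _ _.
have aiSE : ai @` S = a @^-1` W `&` arr G.
  apply/seteqP; split=> [_ [s Ss <-]|g [/= Wag Gg]].
    have [Ws Gs] : (W `&` arr G) s by rewrite -SE.
    by split; [rewrite /= a_ai | apply: ai_arr].
  by exists (a g); [rewrite SE; split=> //; apply: a_arr | apply: ai_a].
split; last by move=> _ [s Ss <-]; apply/ai_arr/sS.
- by apply: continuous_compact => //; apply: continuous_subspaceW sS ai_cont.
- by rewrite aiSE; apply: preimage_open_in.
Qed.

Lemma iter_ai_image_compact_open k S : compact S -> open_in (arr G) S -> S `<=` arr G ->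
  [/\ compact (iter k ai @` S), open_in (arr G) (iter k ai @` S) & iter k ai @` S `<=` arr G].
Proof.
move=> cS oS sS; elim: k => [|k IH]; first by rewrite image_id.
rewrite -[iter k.+1 ai]/(ai \o iter k ai) -image_comp.
by case: IH; apply: ai_image_compact_open.
Qed.

End Automorphism.

Lemma Zset_Hset i : Zset i `<=` Hset.
Proof. by move=> t [x [_ ->]]; exists i.1.1, i.1.2, x. Qed.

Lemma Hset_hunit q : Hset (hunit q).
Proof. by exists [::], [::], q; rewrite pcat0 subrr. Qed.

Section Ginf.
Variables (T : topologicalType) (G : gpd T) (a ai : T -> T).
Hypothesis G_gpd : is_groupoid G.
Hypothesis a_aut : automorphism G a ai.

Lemma units_Ginf_hunit q v : units G v -> units (Ginf G a ai) (hunit q, v).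
Proof.
move=> /(unitsP G_gpd) [Gv rgv _]; exists (hunit q, v); first by split=> //; apply: Hset_hunit.
by rewrite /= rgv.
Qed.

Lemma Ginf_rg_image al be F S : S `<=` units G ->
  rg (Ginf G a ai) @` (Zset ((al, be), F) `*` S) = (hunit @` cyl al F) `*` S.
Proof.
move=> SG; rewrite Zset_image; apply/seteqP; split.
  move=> _ [[t u] [/= [x Fx <-] Su] <-]; split; first by exists (pcat al x) => //; exists x.
  by have [_ -> _] := unitsP G_gpd (SG _ Su).
move=> [t u] [/= [q [x Fx <-] <-] Su]; exists (harr al be x, u); first by split=> //; exists x.
by have [_ /= -> _] := unitsP G_gpd (SG _ Su).
Qed.

Lemma Ginf_sc_image al be F S : S `<=` units G ->
  sc (Ginf G a ai) @` (Zset ((al, be), F) `*` S) =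
  (hunit @` cyl be F) `*` (zpow a ai ((size al)%:Z - (size be)%:Z) @` S).
Proof.
move=> SG; rewrite Zset_image; apply/seteqP; split.
  move=> _ [[t u] [/= [x Fx <-] Su] <-]; split; first by exists (pcat be x) => //; exists x.
  by have [_ _ ->] := unitsP G_gpd (SG _ Su); exists u.
move=> [t w] [/= [q [x Fx <-] <-] [u Su <-]].
exists (harr al be x, u); first by split=> //; exists x.
by have [_ _ /= ->] := unitsP G_gpd (SG _ Su).
Qed.

Lemma Ginf_bisection al be F S : S `<=` units G ->
  {in S &, injective (zpow a ai ((size al)%:Z - (size be)%:Z))} ->
  bisection (Ginf G a ai) (Zset ((al, be), F) `*` S).
Proof.
move=> SG zinj; rewrite Zset_image; split; [|split].
- move=> [t u] [/= [x _ <-] /SG /(unitsP G_gpd) [Gu _ _]].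
  by split=> //; exists al, be, x.
- move=> [t u] [t' u'] [/= [x _ <-] Su] [/= [x' _ <-] Su'] [/pcat_inj <-].
  have [_ -> _] := unitsP G_gpd (SG _ Su); have [_ -> _] := unitsP G_gpd (SG _ Su').
  by move=> _ ->.
move=> [t u] [t' u'] [/= [x _ <-] Su] [/= [x' _ <-] Su'] [/pcat_inj <-].
have [_ _ ->] := unitsP G_gpd (SG _ Su); have [_ _ ->] := unitsP G_gpd (SG _ Su').
by move=> _ /zinj; rewrite !inE => ->.
Qed.

Lemma Ginf_contracting_bisection m F V l :
  compact V -> open_in (arr G) V -> V `<=` units G -> V !=set0 ->
  (0 < l)%N -> iter l ai @` V `<=` V ->
  exists B, [/\ compact_open_bisection (Ginf G a ai) B,
    rg (Ginf G a ai) @` B `<` sc (Ginf G a ai) @` B &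
    sc (Ginf G a ai) @` B = (hunit @` cyl m F) `*` V].
Proof.
move=> cV oV VG [v0 Vv0] l_gt0 contrV; have [e eF] := exists_notin F.
have VGarr : V `<=` arr G by move=> v /VG /(unitsP G_gpd) [].
have [cVl oVl VlGarr] := iter_ai_image_compact_open a_aut l cV oV VGarr.
have VlG : iter l ai @` V `<=` units G.
  by move=> t [v /VG Gv <-]; apply: (units_iter_ai G_gpd a_aut).
have nuE : nseq l e = e :: nseq l.-1 e by rewrite -[in LHS](prednK l_gt0).
have cocycleE : ((size (m ++ nseq l e))%:Z - (size m)%:Z = l%:Z)%R.
  by rewrite size_cat size_nseq; lia.
pose B := Zset ((m ++ nseq l e, m), F) `*` iter l ai @` V.
have scE : sc (Ginf G a ai) @` B = (hunit @` cyl m F) `*` V.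
  rewrite Ginf_sc_image // cocycleE /= image_comp eq_image_id // => v /VGarr.
  exact: (iter_a_ai a_aut).
exists B; split=> //.
- split; first by apply: compact_setX => //; apply: compact_Zset.
    by apply: open_in_setX (open_Zset _) (@Zset_Hset _) oVl.
  apply: Ginf_bisection => // u u' /set_mem [v Vv <-] /set_mem [v' Vv' <-].
  have [Gv Gv'] := (VGarr _ Vv, VGarr _ Vv').
  by rewrite cocycleE /= !(iter_a_ai a_aut) // => ->.
rewrite scE Ginf_rg_image //; split.
  by apply: setSX contrV _; apply: image_subset; rewrite nuE; apply: cyl_catr.
move=> /(_ (hunit (inl m), v0)) [].
  by split=> //; exists (inl m) => //; exists (inl [::]); rewrite /= ?cats0.
move=> [t mt [tE _]] _; rewrite tE nuE in mt.
exact: inl_notin_cyl_cat mt.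
Qed.

End Ginf.

Theorem lemma5p4 (T : topologicalType) (G : gpd T) (a ai : T -> T)
    (BB : set (set T)) :
  lch_etale_groupoid G ->
  automorphism G a ai ->
  ample G ->
  (forall V, BB V -> compact_open_bisection G V /\ V `<=` units G) ->
  (forall W x, open_in (units G) W -> W x ->
     exists V, [/\ BB V, V x & V `<=` W]) ->
  (forall V, BB V ->
     exists l : nat, (1 <= l)%N /\ zpow a ai (- (l%:Z))%R @` V `<=` V) ->
  locally_contracting (Ginf G a ai).
Proof.
move=> [[G_gpd _] _ _ _] a_aut _ BB_cob BB_basis BB_contract W [U [oU WE]] [w Ww].
move: Ww; rewrite WE => -[Uw [[[[p ?] ?] g] [_ Gg] wE]].
have : nbhs w U by apply: open_nbhs_nbhs.
rewrite -wE => -[[A1 A2] [/= /nbhs_hunit [m [F [_ mFA1]]] A2g] A12U].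
move: A2g; rewrite nbhsE => -[B2 [oB2 B2g] B2A2].
have [V [BBV Vg VB2]] : exists V, [/\ BB V, V (rg G g) & V `<=` B2 `&` units G].
  by apply: BB_basis; [exists B2 | split=> //; exists g].
have [[cV oV _] VG] := BB_cob V BBV.
have [l [l_gt0 contrV]] := BB_contract V BBV; rewrite zpowN // in contrV.
have [B [cobB rg_sc scE]] :=
  Ginf_contracting_bisection G_gpd a_aut m F cV oV VG (ex_intro _ _ Vg) l_gt0 contrV.
exists B; split=> //; rewrite scE => -[_ u] [/= [q' mq' <-] Vu].
have [/B2A2 A2u Gu] := VB2 _ Vu.
by split; [apply: A12U; split=> //; apply: mFA1; exists q' | apply: units_Ginf_hunit].
Qed.
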